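(* Let $(A,\mu,\alpha,\beta)$ be a BiHom-commutative algebra (with $\mu(a\otimes b)=a\cdot b$) and let $D:A\to A$ be a derivation in the usual sense, i.e. $D(x\cdot y)=x\cdot D(y)+D(x)\cdot y$ for all $x,y$, commuting with $\alpha$ and $\beta$. Define $a\ast b=a\cdot D(b)$. Then $(A,\ast,\alpha,\beta)$ is a BiHom-Novikov algebra.
   Context: Work over a field. A BiHom-associative algebra is a 4-tuple $(A,\mu,\alpha,\beta)$ with $\alpha,\beta$ commuting linear maps, multiplicative for $\mu$, and $\alpha(x)\cdot(y\cdot z)=(x\cdot y)\cdot\beta(z)$; it is BiHom-commutative if $\beta(a)\cdot\alpha(b)=\beta(b)\cdot\alpha(a)$ for all $a,b$. A BiHom-Novikov algebra is a 4-tuple $(A,\ast,\alpha,\beta)$ with commuting linear maps $\alpha,\beta$ multiplicative for $\ast$ such that for all $x,y,z$: $(\beta(x)\ast\alpha(y))\ast\beta(z)-\alpha\beta(x)\ast(\alpha(y)\ast z)=(\beta(y)\ast\alpha(x))\ast\beta(z)-\alpha\beta(y)\ast(\alpha(x)\ast z)$ and $(x\ast\beta(y))\ast\alpha\beta(z)=(x\ast\beta(z))\ast\alpha\beta(y)$. *)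

From HB Require Import structures.
From mathcomp Require Import all_boot all_order all_algebra.
Set Implicit Arguments. Unset Strict Implicit. Unset Printing Implicit Defensive.
Import GRing.Theory.
Local Open Scope ring_scope.

Definition bilinear_op (K : fieldType) (A : lmodType K) (mul : A -> A -> A) : Prop :=
  (forall (k : K) (x y z : A), mul (k *: x + y) z = k *: mul x z + mul y z) /\
  (forall (k : K) (x y z : A), mul x (k *: y + z) = k *: mul x y + mul x z).

Definition bihom_maps (K : fieldType) (A : lmodType K) (mul : A -> A -> A)
    (alpha beta : A -> A) : Prop :=
  linear alpha /\ linear beta /\
  (forall x, alpha (beta x) = beta (alpha x)) /\
  (forall x y, alpha (mul x y) = mul (alpha x) (alpha y)) /\
  (forall x y, beta (mul x y) = mul (beta x) (beta y)).

Definition BiHomAssociative (K : fieldType) (A : lmodType K) (mul : A -> A -> A)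
    (alpha beta : A -> A) : Prop :=
  bilinear_op mul /\ bihom_maps mul alpha beta /\
  (forall x y z, mul (alpha x) (mul y z) = mul (mul x y) (beta z)).

Definition BiHomCommutativeAlgebra (K : fieldType) (A : lmodType K) (mul : A -> A -> A)
    (alpha beta : A -> A) : Prop :=
  BiHomAssociative mul alpha beta /\
  (forall a b, mul (beta a) (alpha b) = mul (beta b) (alpha a)).

Definition BiHomNovikov (K : fieldType) (A : lmodType K) (ast : A -> A -> A)
    (alpha beta : A -> A) : Prop :=
  bilinear_op ast /\ bihom_maps ast alpha beta /\
  (forall x y z,
      ast (ast (beta x) (alpha y)) (beta z) - ast (alpha (beta x)) (ast (alpha y) z)
    = ast (ast (beta y) (alpha x)) (beta z) - ast (alpha (beta y)) (ast (alpha x) z)) /\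
  (forall x y z,
      ast (ast x (beta y)) (alpha (beta z)) = ast (ast x (beta z)) (alpha (beta y))).

From HB Require Import structures.
From mathcomp Require Import all_boot all_order all_algebra.
Set Implicit Arguments. Unset Strict Implicit.
Import GRing.Theory.
Local Open Scope ring_scope.

(* BiHom-associativity and BiHom-commutativity combine into twisted left and
   right commutativity laws.  For a * b = a D(b), the Leibniz rule collapses
   the associator (beta x * alpha y) * beta z - alpha beta x * (alpha y * z)
   to - alpha beta x (alpha y D^2 z), which is symmetric in x and y by left
   commutativity; the second Novikov identity is right commutativity. *)

Section BiHomCommutative.

Variables (K : fieldType) (A : lmodType K) (mul : A -> A -> A) (alpha beta : A -> A).

Hypothesis mulA : forall x y z, mul (alpha x) (mul y z) = mul (mul x y) (beta z).
Hypothesis mulC : forall a b, mul (beta a) (alpha b) = mul (beta b) (alpha a).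

Lemma bihom_mulCA x y w :
  mul (alpha (beta x)) (mul (alpha y) w) = mul (alpha (beta y)) (mul (alpha x) w).
Proof. by rewrite mulA mulC -mulA. Qed.

Hypothesis alpha_betaC : forall x, alpha (beta x) = beta (alpha x).

Lemma bihom_mulAC x u v :
  mul (mul x (beta u)) (alpha (beta v)) = mul (mul x (beta v)) (alpha (beta u)).
Proof. by rewrite !alpha_betaC -!mulA mulC. Qed.

Variable D : A -> A.
Hypothesis mulDr : forall x y z, mul x (y + z) = mul x y + mul x z.
Hypothesis D_leibniz : forall x y, D (mul x y) = mul x (D y) + mul (D x) y.
Hypothesis D_alpha : forall x, D (alpha x) = alpha (D x).
Hypothesis D_beta : forall x, D (beta x) = beta (D x).

Lemma derived_associator x y z :
  mul (mul (beta x) (D (alpha y))) (D (beta z))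
    - mul (alpha (beta x)) (D (mul (alpha y) (D z)))
  = - mul (alpha (beta x)) (mul (alpha y) (D (D z))).
Proof.
rewrite D_leibniz D_alpha D_beta mulDr -mulA.
by rewrite opprD addrCA subrr addr0.
Qed.

End BiHomCommutative.

Theorem corollary2p9 (K : fieldType) (A : lmodType K) (mul : A -> A -> A)
    (alpha beta : A -> A) (D : A -> A) :
  BiHomCommutativeAlgebra mul alpha beta ->
  linear D ->
  (forall x y, D (mul x y) = mul x (D y) + mul (D x) y) ->
  (forall x, D (alpha x) = alpha (D x)) ->
  (forall x, D (beta x) = beta (D x)) ->
  BiHomNovikov (fun a b => mul a (D b)) alpha beta.
Proof.
move=> [[[mulZDl mulZDr] [[lin_a [lin_b [abC [mul_a mul_b]]]] mulA]] mulC].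
move=> lin_D D_leibniz D_alpha D_beta.
have mulDr_add x y z : mul x (y + z) = mul x y + mul x z.
  by have := mulZDr 1 x y z; rewrite !scale1r.
split; [by split=> k x y z; rewrite ?mulZDl // lin_D mulZDr |].
split; first by do 3 split=> //; split=> x y; rewrite ?mul_a ?mul_b ?D_alpha ?D_beta.
split=> x y z /=.
- rewrite !(derived_associator mulA mulDr_add D_leibniz D_alpha D_beta).
  by rewrite (bihom_mulCA mulA mulC).
- by rewrite !D_alpha !D_beta (bihom_mulAC mulA mulC abC).
Qed.
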